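(* Consider the zooming algorithm on an instance of the Lipschitz MAB problem. If phase $i$ is clean, then $\Delta(v)\le 4\,r_t(v)$ for every round $t$ of the phase and every strategy $v$ that is active at time $t$. Consequently $n_t(v)\le O(i)\,\Delta(v)^{-2}$ for such $v$ (absolute constant in $O(\cdot)$).
   Context: Lipschitz MAB problem on $(L,X)$ of diameter $\le1$: unknown $\mu:X\to[0,1]$ with $|\mu(x)-\mu(y)|\le L(x,y)$; playing $v$ yields an independent sample in $[0,1]$ of mean $\mu(v)$. $\mu^*=\sup_X\mu$ (not necessarily attained), $\Delta(v)=\mu^*-\mu(v)$. Zooming algorithm: phases $i=1,2,\dots$ of $2^i$ rounds; within phase $i$, $n_t(v)$ = number of plays of $v$ in this phase before round $t$, $\mu_t(v)$ = their average reward ($0$ if none), $r_t(v)=\sqrt{8i/(2+n_t(v))}$, $I_t(v)=\mu_t(v)+2r_t(v)$; at phase start nothing is active; $u$ is covered at $t$ if $u\in B(v,r_t(v))$ (open ball) for some active $v$; in each round, if some strategy is uncovered one such is activated, then an active strategy of maximal index is played (ties arbitrary). Phase $i$ is clean if $|\mu_t(v)-\mu(v)|\le r_t(v)$ for every strategy $v$ played at least once in the phase and every round $t$ of the phase. *)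

From Stdlib Require Import Reals Lra Lia Classical ClassicalEpsilon.
Open Scope R_scope.

(* Rounds of the phase are
   indexed t = 0, 1, ..., 2^i - 1 (position inside the phase).
   A run of the phase is described by:
     a : nat -> option X   (a t = Some u : strategy u activated in round t)
     p : nat -> X          (strategy played in round t)
     y : nat -> R          (reward observed in round t)                    *)

Definition eqb_cl {X : Type} (x y : X) : bool :=
  if excluded_middle_informative (x = y) then true else false.

Fixpoint nplays {X : Type} (p : nat -> X) (v : X) (t : nat) : nat :=
  match t with
  | O => O
  | S s => (if eqb_cl (p s) v then 1 else 0) + nplays p v s
  end%nat.

Fixpoint sumrew {X : Type} (p : nat -> X) (y : nat -> R) (v : X) (t : nat) : R :=
  match t with
  | O => 0
  | S s => (if eqb_cl (p s) v then y s else 0) + sumrew p y v s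
  end.

(* mu_t(v): average reward (0 if none) *)
Definition avgrew {X : Type} (p : nat -> X) (y : nat -> R) (v : X) (t : nat) : R :=
  match nplays p v t with
  | O => 0
  | n => sumrew p y v t / INR n
  end.

Definition rad (i n : nat) : R := sqrt (8 * INR i / (2 + INR n)).

Definition zindex {X : Type} (i : nat) (p : nat -> X) (y : nat -> R) (v : X) (t : nat) : R :=
  avgrew p y v t + 2 * rad i (nplays p v t).

Definition activated_before {X : Type} (a : nat -> option X) (v : X) (t : nat) : Prop :=
  exists s, (s < t)%nat /\ a s = Some v.

Definition active_at {X : Type} (a : nat -> option X) (v : X) (t : nat) : Prop :=
  exists s, (s <= t)%nat /\ a s = Some v.

(* u is covered at t (activation step of round t): u lies in the open ball
   B(v, r_t(v)) of some strategy v that is active at that moment *)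
Definition covered {X : Type} (L : X -> X -> R) (i : nat) (a : nat -> option X)
  (p : nat -> X) (u : X) (t : nat) : Prop :=
  exists v, activated_before a v t /\ L u v < rad i (nplays p v t).

Definition metric_diam1 {X : Type} (L : X -> X -> R) : Prop :=
  (forall x y, 0 <= L x y) /\ (forall x y, L x y = 0 <-> x = y) /\
  (forall x y, L x y = L y x) /\ (forall x y z, L x z <= L x y + L y z) /\
  (forall x y, L x y <= 1).

Definition lipschitz_payoff {X : Type} (L : X -> X -> R) (mu : X -> R) : Prop :=
  (forall x, 0 <= mu x <= 1) /\ (forall x y, Rabs (mu x - mu y) <= L x y).

Definition zooming_phase_run {X : Type} (L : X -> X -> R) (i : nat)
  (a : nat -> option X) (p : nat -> X) (y : nat -> R) : Prop :=
  forall t, (t < 2 ^ i)%nat ->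
    (forall u, a t = Some u -> ~ covered L i a p u t) /\
    (a t = None -> forall u, covered L i a p u t) /\
    active_at a (p t) t /\
    (forall w, active_at a w t -> zindex i p y w t <= zindex i p y (p t) t) /\
    0 <= y t <= 1.

Definition clean_phase {X : Type} (i : nat) (mu : X -> R)
  (p : nat -> X) (y : nat -> R) : Prop :=
  forall v t, (t < 2 ^ i)%nat -> (exists s, (s < 2 ^ i)%nat /\ p s = v) ->
    Rabs (avgrew p y v t - mu v) <= rad i (nplays p v t).

From Stdlib Require Import Reals Lra Lia Classical ClassicalEpsilon.
Open Scope R_scope.

(* The central fact is that, in every round s of the phase, the index of
   the strategy played dominates every payoff mu(x), hence dominates mu*:
   - if a strategy u is activated in round s, u has not been played yet, so
     its index is 2 r(0) >= 4 >= mu(x), and the played index is at least it;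
   - otherwise x is covered by an active w with L(x,w) < r_s(w); cleanness
     gives mu(w) <= mu_s(w) + r_s(w), so mu(x) < mu(w) + r_s(w) <= I_s(w),
     and the played index is at least I_s(w).
   For a strategy v with n = n_t(v) >= 1 plays, let s be its last play; then
   mu* <= I_s(v) <= mu(v) + 3 r_s(v) by cleanness, and 3 r(n-1) <= 4 r(n)
   gives Delta(v) <= 4 r_t(v).  If n = 0 then r_t(v) >= 2 >= Delta(v).
   Squaring, n Delta(v)^2 <= 16 n r(n)^2 = 128 i n/(2+n) <= 128 i. *)

Lemma eqb_cl_true {X : Type} (x y : X) : eqb_cl x y = true -> x = y.
Proof.
  unfold eqb_cl; destruct (excluded_middle_informative (x = y)); congruence.
Qed.

Lemma nplays_last {X : Type} (p : nat -> X) (v : X) (t : nat) :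
  (0 < nplays p v t)%nat ->
  exists s, (s < t)%nat /\ p s = v /\ nplays p v t = S (nplays p v s).
Proof.
  induction t as [|t IH]; simpl; intros Hpos; [lia|].
  destruct (eqb_cl (p t) v) eqn:Eplay.
  - exists t; split; [lia|]; split; [now apply eqb_cl_true | simpl; lia].
  - destruct (IH ltac:(lia)) as [s [Hst [Hps Hcount]]].
    exists s; split; [lia|]; split; [assumption | simpl; lia].
Qed.

Lemma avgrew_unplayed {X : Type} (p : nat -> X) (y : nat -> R) (v : X) (t : nat) :
  nplays p v t = 0%nat -> avgrew p y v t = 0.
Proof. intros H; unfold avgrew; now rewrite H. Qed.

Lemma Rabs_le_bounds (x e : R) : Rabs x <= e -> - e <= x <= e.
Proof.
  intros H; pose proof (Rle_abs x); pose proof (Rle_abs (- x));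
  rewrite Rabs_Ropp in *; lra.
Qed.

Lemma rad_pos (i n : nat) : (1 <= i)%nat -> 0 < rad i n.
Proof.
  intros Hi; unfold rad; apply sqrt_lt_R0.
  pose proof (le_INR 1 i Hi); pose proof (pos_INR n).
  apply Rdiv_lt_0_compat; simpl in *; lra.
Qed.

Lemma rad_sq (i n : nat) : rad i n * rad i n = 8 * INR i / (2 + INR n).
Proof.
  unfold rad; apply sqrt_sqrt.
  pose proof (pos_INR i); pose proof (pos_INR n).
  apply Rmult_le_pos; [lra | left; apply Rinv_0_lt_compat; lra].
Qed.

(* Before the first play the radius is at least 2, so the index of an
   unplayed strategy (2 r(0)) exceeds every payoff. *)
Lemma rad_unplayed_ge2 (i : nat) : (1 <= i)%nat -> 2 <= rad i 0.
Proof.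
  intros Hi; pose proof (le_INR 1 i Hi) as Hi1; simpl in Hi1.
  pose proof (rad_pos i 0 Hi); pose proof (rad_sq i 0) as Hsq; simpl in Hsq.
  replace (8 * INR i / (2 + 0)) with (4 * INR i) in Hsq by field.
  nra.
Qed.

(* One more play shrinks the radius by a factor of at most 3/4:
   9 (8i)/(2+m) <= 16 (8i)/(3+m), i.e. 9 (3+m) <= 16 (2+m). *)
Lemma rad_step (i m : nat) : (1 <= i)%nat -> 3 * rad i m <= 4 * rad i (S m).
Proof.
  intros Hi; pose proof (rad_pos i m Hi); pose proof (rad_pos i (S m) Hi).
  apply Rsqr_incr_0_var; [unfold Rsqr | lra].
  replace (3 * rad i m * (3 * rad i m)) with (9 * (rad i m * rad i m)) by ring.
  replace (4 * rad i (S m) * (4 * rad i (S m)))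
    with (16 * (rad i (S m) * rad i (S m))) by ring.
  rewrite !rad_sq, S_INR.
  pose proof (pos_INR i); pose proof (pos_INR m).
  apply Rmult_le_reg_r with ((2 + INR m) * (3 + INR m)); [nra|].
  unfold Rdiv.
  replace (9 * (8 * INR i * / (2 + INR m)) * ((2 + INR m) * (3 + INR m)))
    with (72 * INR i * (3 + INR m)) by (field; lra).
  replace (16 * (8 * INR i * / (2 + (INR m + 1))) * ((2 + INR m) * (3 + INR m)))
    with (128 * INR i * (2 + INR m)) by (field; lra).
  nra.
Qed.

(* A gap of at most 4 r(n) is compatible with only O(i) / gap^2 plays:
   n gap^2 <= 16 n r(n)^2 = 128 i n / (2+n) <= 128 i. *)
Lemma count_of_gap (i n : nat) (gap : R) :
  (1 <= i)%nat -> 0 <= gap -> gap <= 4 * rad i n ->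
  INR n * gap ^ 2 <= 128 * INR i.
Proof.
  intros Hi Hgap0 Hgap.
  pose proof (pos_INR i); pose proof (pos_INR n).
  assert (Hsq : gap ^ 2 <= 16 * (rad i n * rad i n)).
  { pose proof (rad_pos i n Hi); nra. }
  rewrite rad_sq in Hsq.
  assert (Hfrac : INR n * (16 * (8 * INR i / (2 + INR n))) <= 128 * INR i).
  { apply Rmult_le_reg_r with (2 + INR n); [lra|]; unfold Rdiv.
    replace (INR n * (16 * (8 * INR i * / (2 + INR n))) * (2 + INR n))
      with (128 * INR i * INR n) by (field; lra).
    nra. }
  pose proof (Rmult_le_compat_l (INR n) _ _ ltac:(lra) Hsq); lra.
Qed.

Section CleanPhase.

Variables (X : Type) (L : X -> X -> R) (mu : X -> R) (mstar : R).
Variables (i : nat) (a : nat -> option X) (p : nat -> X) (y : nat -> R).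

Hypothesis HL : metric_diam1 L.
Hypothesis Hmu : lipschitz_payoff L mu.
Hypothesis Hlub : is_lub (fun r => exists x, r = mu x) mstar.
Hypothesis Hi : (1 <= i)%nat.
Hypothesis Hrun : zooming_phase_run L i a p y.
Hypothesis Hclean : clean_phase i mu p y.

Lemma index_unplayed (w : X) (s : nat) :
  nplays p w s = 0%nat -> 4 <= zindex i p y w s.
Proof.
  intros H; unfold zindex; rewrite avgrew_unplayed, H by exact H.
  pose proof (rad_unplayed_ge2 i Hi); lra.
Qed.

Lemma clean_bounds (w : X) (s s' : nat) :
  (s < 2 ^ i)%nat -> (s' < 2 ^ i)%nat -> p s' = w ->
  - rad i (nplays p w s) <= avgrew p y w s - mu w <= rad i (nplays p w s).
Proof.
  intros Hs Hs' Hps; apply Rabs_le_bounds, Hclean; [exact Hs|].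
  now exists s'.
Qed.

(* A strategy activated in round s has never been played: once played it
   is active, so it covers itself (L(u,u) = 0 < r). *)
Lemma activated_unplayed (s : nat) (u : X) :
  (s < 2 ^ i)%nat -> a s = Some u -> nplays p u s = 0%nat.
Proof.
  intros Hs Has.
  destruct (nplays p u s) as [|n] eqn:Ecount; [reflexivity | exfalso].
  destruct (nplays_last p u s ltac:(lia)) as [s' [Hs' [Hps _]]].
  destruct (Hrun s' ltac:(lia)) as [_ [_ [[s'' [Hs'' Ha''] ] _]]].
  destruct (Hrun s Hs) as [Hnotcov _].
  apply (Hnotcov u Has); exists u; split.
  - exists s''; split; [lia | now rewrite Ha'', Hps].
  - destruct HL as [_ [HLeq _]]; rewrite (proj2 (HLeq u u) eq_refl).
    now apply rad_pos.
Qed.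

Lemma played_index_dominates (s : nat) (x : X) :
  (s < 2 ^ i)%nat -> mu x <= zindex i p y (p s) s.
Proof.
  intros Hs; destruct (Hrun s Hs) as [_ [Hcov [_ [Hmax _]]]].
  destruct Hmu as [Hmu01 HmuL]; pose proof (Hmu01 x).
  destruct (a s) as [u|] eqn:Has.
  - assert (Hact : active_at a u s) by (exists s; split; auto).
    pose proof (Hmax u Hact); pose proof (index_unplayed u s (activated_unplayed s u Hs Has)).
    lra.
  - destruct (Hcov eq_refl x) as [w [[s' [Hs' Hw]] Hclose]].
    assert (Hact : active_at a w s) by (exists s'; split; [lia | exact Hw]).
    pose proof (Hmax w Hact).
    pose proof (Rabs_le_bounds _ _ (HmuL x w)).
    destruct (nplays p w s) as [|n] eqn:Ecount.
    + pose proof (index_unplayed w s Ecount); lra.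
    + destruct (nplays_last p w s ltac:(lia)) as [s'' [Hs'' [Hps _]]].
      pose proof (clean_bounds w s s'' Hs ltac:(lia) Hps).
      unfold zindex in *; rewrite Ecount in *; lra.
Qed.

Lemma played_index_ge_mstar (s : nat) :
  (s < 2 ^ i)%nat -> mstar <= zindex i p y (p s) s.
Proof.
  intros Hs; apply (proj2 Hlub); intros r [x ->].
  now apply played_index_dominates.
Qed.

(* The regret bound of the phase: Delta(v) <= 4 r_t(v).  The argument only
   uses the last play of v, so it holds whether or not v is active at t. *)
Lemma gap_le_4rad (t : nat) (v : X) :
  (t < 2 ^ i)%nat -> mstar - mu v <= 4 * rad i (nplays p v t).
Proof.
  intros Ht.
  assert (Hm1 : mstar <= 1) by (apply (proj2 Hlub); intros r [x ->]; apply Hmu).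
  destruct (nplays p v t) as [|n] eqn:Ecount.
  - pose proof (rad_unplayed_ge2 i Hi); pose proof (proj1 Hmu v); lra.
  - destruct (nplays_last p v t ltac:(lia)) as [s [Hst [Hps Hcount]]].
    rewrite Ecount in Hcount; injection Hcount as Hcount.
    pose proof (played_index_ge_mstar s ltac:(lia)) as Hidx; rewrite Hps in Hidx.
    pose proof (clean_bounds v s s ltac:(lia) ltac:(lia) Hps).
    pose proof (rad_step i n Hi).
    unfold zindex in Hidx; rewrite <- Hcount in *; lra.
Qed.

End CleanPhase.

Theorem mainTheorem9 :
  exists C : R, 0 < C /\
  forall (X : Type) (L : X -> X -> R) (mu : X -> R) (mstar : R)
    (i : nat) (a : nat -> option X) (p : nat -> X) (y : nat -> R),
    metric_diam1 L ->
    lipschitz_payoff L mu ->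
    is_lub (fun r => exists x, r = mu x) mstar ->
    (1 <= i)%nat ->
    zooming_phase_run L i a p y ->
    clean_phase i mu p y ->
    forall t v, (t < 2 ^ i)%nat -> active_at a v t ->
      mstar - mu v <= 4 * rad i (nplays p v t) /\
      INR (nplays p v t) * (mstar - mu v) ^ 2 <= C * INR i.
Proof.
  exists 128; split; [lra|].
  intros X L mu mstar i a p y HL Hmu Hlub Hi Hrun Hclean t v Ht _.
  assert (Hgap : mstar - mu v <= 4 * rad i (nplays p v t))
    by exact (gap_le_4rad X L mu mstar i a p y HL Hmu Hlub Hi Hrun Hclean t v Ht).
  assert (Hgap0 : 0 <= mstar - mu v)
    by (pose proof (proj1 Hlub (mu v) (ex_intro _ v eq_refl)); lra).
  split; [exact Hgap | exact (count_of_gap i _ _ Hi Hgap0 Hgap)].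
Qed.
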